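(* Let $T\in SO(n)$ and suppose neither $1$ nor $-1$ is an eigenvalue of $T$. Then $T$ is real in $SO(n)$ if and only if $n\not\equiv 2\pmod 4$.
   Context: An element $g$ of a group $G$ is real in $G$ if there is $h\in G$ with $hgh^{-1}=g^{-1}$. *)

From mathcomp Require Import all_boot all_order all_algebra.
From mathcomp Require Import reals.
Set Implicit Arguments. Unset Strict Implicit. Unset Printing Implicit Defensive.
Import Order.TTheory GRing.Theory Num.Theory.
Local Open Scope ring_scope.

Definition in_SO (R : realType) (n : nat) (M : 'M[R]_n) : Prop :=
  M *m M^T = 1%:M /\ \det M = 1.

Definition real_in_SO (R : realType) (n : nat) (g : 'M[R]_n) : Prop :=
  exists h : 'M[R]_n, in_SO h /\ h *m g *m invmx h = invmx g.

From mathcomp Require Import all_boot all_order all_algebra.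
From mathcomp Require Import reals complex spectral zify.
Set Implicit Arguments. Unset Strict Implicit. Unset Printing Implicit Defensive.
Import Order.TTheory GRing.Theory Num.Theory Num.Def.
Local Open Scope ring_scope.
Local Open Scope sesquilinear_scope.

(* Complexify T and diagonalise it unitarily, T = P^* D P. As T is real and has
   no real eigenvalue, X = P P^T (complex conjugation read in the eigenbasis)
   maps each eigenline of an eigenvalue in the upper half-plane to one of its
   conjugate in the lower half-plane, and back. Swapping the two halves in this
   way yields a real symmetric involution g of trace zero with g T g = T^T; its
   eigenvalues are n/2 times 1 and n/2 times -1, so det g = (-1)^(n/2).
   If h is any orthogonal matrix with h T h^-1 = T^T, then g h commutes with T.
   A real matrix commuting with T preserves the upper half of the spectrum and
   acts on the lower half by the complex conjugate action, so its determinant is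
   |z|^2 >= 0. Hence det h = det g for every such h, and T is real in SO(n)
   exactly when n/2 is even. *)

Lemma prod_signs_sum0 (F : numFieldType) (I : finType) (e : I -> F) :
  (forall i, e i ^+ 2 = 1) -> \sum_i e i = 0 ->
  exists2 s, #|I| = s.*2 & \prod_i e i = (-1) ^+ s.
Proof.
move=> e2 e0; pose A := [pred i | e i == -1].
have eA i : i \in A -> e i = -1 by move/eqP.
have eAC i : i \notin A -> e i = 1.
  by move=> /negPf iA; have /eqP := e2 i; rewrite sqrf_eq1 [_ == -1]iA orbF => /eqP.
exists #|A|.
  move: e0; rewrite (bigID (mem A)) /= (eq_bigr _ eA) (eq_bigr _ eAC).
  rewrite !sumr_const mulNrn addrC => /eqP; rewrite subr_eq0 eqr_nat => /eqP AC.
  by rewrite -(cardC A) -addnn AC.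
rewrite (bigID (mem A)) /= (eq_bigr _ eA) (eq_bigr _ eAC).
by rewrite !prodr_const expr1n mulr1.
Qed.

Lemma diag_intertwineP (R : idomainType) n (a b : 'rV[R]_n) (M : 'M[R]_n) :
  reflect (forall j k, M j k != 0 -> a 0 j = b 0 k)
          (diag_mx a *m M == M *m diag_mx b).
Proof.
apply: (iffP eqP) => [/matrixP aMb j k|abM]; last first.
  apply/matrixP=> j k; rewrite mul_diag_mx mul_mx_diag !mxE mulrC.
  by have [->|/abM->] := eqVneq (M j k) 0; rewrite ?mulr0 ?mul0r.
have := aMb j k; rewrite mul_diag_mx mul_mx_diag !mxE mulrC => /eqP.
by rewrite -subr_eq0 -mulrBr mulf_eq0 subr_eq0 => /orP [/eqP->|/eqP]; rewrite ?eqxx.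
Qed.

Lemma diag_indicator_sandwich (R : pzRingType) n (h : 'I_n -> bool) (M : 'M[R]_n) :
  (forall j k, M j k != 0 -> h j != h k) ->
  diag_mx (\row_k (h k)%:R) *m M *m diag_mx (\row_k (h k)%:R) = 0.
Proof.
move=> hM; apply/matrixP=> j k; rewrite mul_mx_diag mul_diag_mx !mxE.
have [->|/hM hjk] := eqVneq (M j k) 0; first by rewrite mulr0 mul0r.
case hj: (h j); last by rewrite mulr0n !mul0r.
by case hk: (h k); [move: hjk; rewrite hj hk | rewrite mulr0n mulr0].
Qed.

(* q = 1 - p, and X and its inverse Y exchange the ranges of p and q. *)
Section SwapInvolution.
Variables (F : comNzRingType) (n : nat) (X Y p q : 'M[F]_n).
Hypotheses (pq : p + q = 1%:M) (pp : p *m p = p) (XY : X *m Y = 1%:M)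
  (pXp : p *m X *m p = 0) (qXq : q *m X *m q = 0) (pYp : p *m Y *m p = 0).

Lemma swap_conj_proj : X *m p *m Y = q.
Proof.
have pE : p = 1%:M - q by rewrite -pq addrK.
have Xp : X *m p = q *m X *m p.
  by rewrite -[LHS]mul1mx -pq mulmxDl !mulmxA pXp add0r.
by rewrite Xp pE mulmxBr mulmx1 mulmxBl qXq mul0mx subr0 -mulmxA XY mulmx1.
Qed.

Lemma swap_sqr : (p *m Y + X *m p) *m (p *m Y + X *m p) = 1%:M.
Proof.
have YX : Y *m X = 1%:M := mulmx1C XY.
rewrite mulmxDl !mulmxDr !mulmxA pYp mul0mx add0r.
rewrite -(mulmxA p Y X) YX mulmx1 pp -(mulmxA X p p) pp swap_conj_proj.
by rewrite -(mulmxA X p X) -(mulmxA X (p *m X) p) pXp mulmx0 addr0.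
Qed.

Lemma mxtrace_swap : \tr (p *m Y + X *m p) = 0.
Proof.
rewrite mxtraceD -{1}pp -mulmxA mxtrace_mulC pYp mxtrace0 add0r.
by rewrite -{1}pp mulmxA mxtrace_mulC mulmxA pXp mxtrace0.
Qed.

End SwapInvolution.

Lemma det_ge0_conj_projector (C : numClosedFieldType) n (c Q : 'M[C]_n) :
  map_mx conjC c = c -> map_mx conjC Q = 1%:M - Q -> Q *m Q = Q -> c *m Q = Q *m c ->
  0 <= \det c.
Proof.
move=> cR QC QQ cQ; set Q' := 1%:M - Q in QC *.
have Q'C : map_mx conjC Q' = Q by rewrite map_mxB map_mx1 QC subKr.
have QQ' : Q *m Q' = 0 by rewrite mulmxBr mulmx1 QQ subrr.
have Q'Q : Q' *m Q = 0 by rewrite mulmxBl mul1mx QQ subrr.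
have cQ' : c *m Q' = Q' *m c by rewrite mulmxBr mulmxBl mulmx1 mul1mx cQ.
have Q'Q' : Q' *m Q' = Q' by rewrite mulmxBl mul1mx QQ' subr0.
(* Z := c Q + Q' acts as c on the range of Q and its conjugate as c on that of Q'. *)
have -> : c = (c *m Q + Q') *m map_mx conjC (c *m Q + Q').
  rewrite map_mxD map_mxM cR QC Q'C mulmxDl (mulmxDr (c *m Q)) (mulmxDr Q') -!mulmxA QQ.
  rewrite (mulmxA Q c) -cQ -mulmxA QQ' !mulmx0 Q'Q (mulmxA Q' c) -cQ' -mulmxA Q'Q'.
  by rewrite add0r addr0 -mulmxDr addrC subrK mulmx1.
by rewrite det_mulmx det_map_mx mul_conjC_ge0.
Qed.

Lemma normalmx_spectral (C : numClosedFieldType) n (A : 'M[C]_n) :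
  A \is normalmx ->
  A = (spectralmx A)^t* *m diag_mx (spectral_diag A) *m spectralmx A.
Proof. by rewrite -invmx_unitary ?spectral_unitarymx //; move/orthomx_spectralP. Qed.

Lemma det_normal_involution (C : numClosedFieldType) n (A : 'M[C]_n) :
  A \is normalmx -> A *m A = 1%:M -> \tr A = 0 ->
  exists2 s, n = s.*2 & \det A = (-1) ^+ s.
Proof.
move=> /normalmx_spectral AE AA trA.
set P := spectralmx A in AE; set e := spectral_diag A in AE.
have /unitarymxP PP := spectral_unitarymx A; have PtP := mulmx1C PP.
have DE : diag_mx e = P *m A *m P^t*.
  by rewrite AE !mulmxA PP mul1mx -mulmxA PP mulmx1.
have e2 k : e 0 k ^+ 2 = 1.
  have : diag_mx e *m diag_mx e = 1%:M.
    by rewrite DE !mulmxA -(mulmxA _ _ P) PtP mulmx1 -(mulmxA P A A) AA mulmx1 PP.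
  by rewrite mulmx_diag => /matrixP /(_ k k); rewrite !mxE eqxx expr2.
have e0 : \sum_k e 0 k = 0.
  by rewrite -mxtrace_diag DE mxtrace_mulC mulmxA PtP mul1mx trA.
have [s ns ps] := prod_signs_sum0 e2 e0.
exists s; first by rewrite -ns card_ord.
by rewrite AE !det_mulmx mulrAC -det_mulmx PtP det1 mul1r det_diag.
Qed.

Lemma eigenvalue_unitary_norm (C : numClosedFieldType) n (M : 'M[C]_n) a :
  M \is unitarymx -> eigenvalue M a -> `|a| = 1.
Proof.
move=> /unitarymxP MM /eigenvalueP [v vM v0].
have v_pos := dotmx_is_dotmx v0.
have : dotmx v v = `|a| ^+ 2 * dotmx v v.
  rewrite !dotmxE -{1}(mulmx1 v) -MM mulmxA -(mulmxA (v *m M)) -map_mxM -trmx_mul vM.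
  by rewrite linearZ /= map_mxZ -scalemxAr -scalemxAl scalerA mxE normCKC.
move=> /eqP; rewrite -subr_eq0 -{1}[dotmx v v]mul1r -mulrBl mulf_eq0 (gt_eqF v_pos) orbF.
by rewrite subr_eq0 eq_sym sqrp_eq1 // => /eqP.
Qed.

Section RealNormalWithoutRealEigenvalues.
Variables (C : numClosedFieldType) (n : nat) (T : 'M[C]_n).
Hypotheses (T_real : T \is a realmx) (T_normal : T \is normalmx)
  (T_eig : forall a, eigenvalue T a -> a \isn't Num.real).

Let P := spectralmx T.
Let d := spectral_diag T.
Let D := diag_mx d.

Let TE : T = P^t* *m D *m P. Proof. exact: normalmx_spectral. Qed.
Let PPt : P *m P^t* = 1%:M. Proof. exact/unitarymxP/spectral_unitarymx. Qed.
Let PtP : P^t* *m P = 1%:M. Proof. exact: mulmx1C PPt. Qed.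

Let spectral_diag_nonreal k : d 0 k \isn't Num.real.
Proof.
apply: T_eig; apply/eigenvalueP; exists (row k P).
  by rewrite -row_mul TE !mulmxA PPt mul1mx row_mul row_diag_mx -scalemxAl -rowE.
apply: contraTneq isT => Pk0.
have := congr1 (fun v => v *m P^t*) Pk0; rewrite -row_mul PPt row1 mul0mx.
by move=> /rowP/(_ k)/eqP; rewrite !mxE eqxx pnatr_eq0 /= eqxx.
Qed.

Let X := P *m P^T.
Let Xc := map_mx conjC X.

Let PcPt : map_mx conjC P *m P^T = 1%:M.
Proof. by have := congr1 (map_mx conjC) PPt; rewrite map_mxM map_mxCK map_mx1. Qed.

Let X_sym : X^T = X.
Proof. by rewrite trmx_mul trmxK. Qed.

Let X_unitary : X *m Xc = 1%:M.
Proof.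
have /unitarymxP : X \is unitarymx.
  by rewrite mul_unitarymx ?trmx_unitary ?spectral_unitarymx.
by rewrite X_sym.
Qed.

Let Pt_X : P^t* *m X = P^T.
Proof. by rewrite mulmxA PtP mul1mx. Qed.

Let Xc_P : Xc *m P = map_mx conjC P.
Proof. by rewrite /Xc map_mxM -mulmxA PtP mulmx1. Qed.

Let Dc := diag_mx (map_mx conjC d).

Let TtE : T^T = P^t* *m Dc *m P.
Proof.
have -> : T^T = T^t* by rewrite -map_trmx realmxC.
by rewrite {1}TE !trmx_mul !map_mxM trmxCK tr_diag_mx map_diag_mx mulmxA.
Qed.

Let X_intertwine : Dc *m X = X *m D.
Proof.
have TtE' : T^T = P^T *m D *m map_mx conjC P.
  by rewrite {1}TE !trmx_mul map_trmx trmxK tr_diag_mx mulmxA.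
have := congr1 (fun M => P *m M *m P^T) (etrans (esym TtE) TtE').
by rewrite !mulmxA PPt mul1mx -!mulmxA PcPt mulmx1.
Qed.

Let X_support j k : X j k != 0 -> d 0 k = conjC (d 0 j).
Proof. by move/(diag_intertwineP _ _ _ (introT eqP X_intertwine))<-; rewrite mxE. Qed.

Let Xc_intertwine : Dc *m Xc = Xc *m D.
Proof.
apply/eqP/diag_intertwineP => j k; rewrite mxE conjC_eq0 => /X_support->.
by rewrite mxE.
Qed.

Let upper k := 0 < 'Im (d 0 k).
Let p := diag_mx (\row_k (upper k)%:R : 'rV[C]_n).
Let q := diag_mx (\row_k (~~ upper k)%:R : 'rV[C]_n).

Let X_upper j k : X j k != 0 -> upper j != upper k.
Proof.
move=> /X_support dk; rewrite /upper dk Im_conj oppr_gt0.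
have /Creal_ImP/eqP Im_neq0 := spectral_diag_nonreal j.
by case: (real_ltgt0P (Creal_Im (d 0 j))) Im_neq0.
Qed.

Let p_add_q : p + q = 1%:M.
Proof.
by apply/matrixP=> i j; rewrite !mxE -mulrnDl; case: (upper i); rewrite ?add0r ?addr0.
Qed.

Let p_idem : p *m p = p.
Proof.
rewrite mulmx_diag; congr diag_mx; apply/rowP=> k.
by rewrite !mxE; case: (upper k); rewrite ?mulr1 ?mulr0.
Qed.

Let p_conj : map_mx conjC p = p.
Proof. by apply/matrixP=> i j; rewrite !mxE rmorphMn rmorph_nat. Qed.

Let pXp : p *m X *m p = 0.
Proof. exact: diag_indicator_sandwich X_upper. Qed.

Let qXq : q *m X *m q = 0.
Proof. by apply: diag_indicator_sandwich => j k /X_upper; case: (upper j); case: (upper k). Qed.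

Let pXcp : p *m Xc *m p = 0.
Proof. by have := congr1 (map_mx conjC) pXp; rewrite 2!map_mxM p_conj map_mx0. Qed.

Let W := p *m Xc + X *m p.

Let W_sqr : W *m W = 1%:M.
Proof. exact: swap_sqr p_add_q p_idem X_unitary pXp qXq pXcp. Qed.

Let mxtrace_W : \tr W = 0.
Proof. exact: mxtrace_swap p_idem pXp pXcp. Qed.

Let W_conj : X *m map_mx conjC W *m Xc = W.
Proof.
rewrite map_mxD (map_mxM _ p) (map_mxM _ X) p_conj map_mxCK mulmxDr mulmxDl.
rewrite (mulmxA X p X) -(mulmxA (X *m p)) X_unitary mulmx1.
by rewrite (mulmxA X Xc) X_unitary mul1mx addrC.
Qed.

Let W_tr : W^T = map_mx conjC W.
Proof.
have Xc_sym : Xc^T = Xc by rewrite map_trmx X_sym.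
rewrite linearD /= (trmx_mul p) (trmx_mul X) tr_diag_mx X_sym Xc_sym.
by rewrite map_mxD (map_mxM _ p) (map_mxM _ X) p_conj map_mxCK addrC.
Qed.

Let unitary_conjM A B : P^t* *m A *m P *m (P^t* *m B *m P) = P^t* *m (A *m B) *m P.
Proof. by rewrite !mulmxA -(mulmxA _ P) PPt mulmx1 -mulmxA. Qed.

Let unitary_conjI A B : P^t* *m A *m P = P^t* *m B *m P -> A = B.
Proof.
by move=> /(congr1 (fun M => P *m M *m P^t*)); rewrite !mulmxA PPt !mul1mx -!mulmxA PPt !mulmx1.
Qed.

Let g := P^t* *m W *m P.

Let g_conj : map_mx conjC g = g.
Proof.
rewrite (map_mxM _ (P^t* *m W) P) (map_mxM _ (P^t*) W) map_mxCK -Pt_X -Xc_P.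
by rewrite mulmxA -(mulmxA (P^t*) X) -(mulmxA (P^t*)) W_conj.
Qed.

Let g_tr : g^T = g.
Proof.
rewrite -[RHS]g_conj (trmx_mul (P^t* *m W)) (trmx_mul (P^t*)) map_trmx trmxK W_tr.
by rewrite (map_mxM _ (P^t* *m W) P) (map_mxM _ (P^t*) W) map_mxCK mulmxA.
Qed.

Let g_real : g \is a realmx.
Proof.
by apply/mxOverP=> i j; apply/CrealP; have /matrixP/(_ i j) := g_conj; rewrite mxE.
Qed.

Let g_normal : g \is normalmx.
Proof. by apply/normalmxP; rewrite g_tr g_conj. Qed.

Let g_sqr : g *m g = 1%:M.
Proof. by rewrite unitary_conjM W_sqr mulmx1 PtP. Qed.

Let mxtrace_g : \tr g = 0.
Proof. by rewrite mxtrace_mulC mulmxA PPt mul1mx mxtrace_W. Qed.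

Let W_intertwine : W *m D = Dc *m W.
Proof.
rewrite mulmxDl mulmxDr -(mulmxA p) -Xc_intertwine -(mulmxA X) (diag_mxC _ d).
by rewrite (mulmxA X) -X_intertwine !(mulmxA Dc) (mulmxA p) diag_mxC.
Qed.

Let g_reverses : g *m T = T^T *m g.
Proof. by rewrite {1}TE TtE !unitary_conjM W_intertwine. Qed.

Lemma det_ge0_commute c : c \is a realmx -> c *m T = T *m c -> 0 <= \det c.
Proof.
move=> c_real cT; pose N := P *m c *m P^t*.
have cE : c = P^t* *m N *m P by rewrite !mulmxA PtP mul1mx -mulmxA PtP mulmx1.
have DN : D *m N = N *m D.
  by apply: unitary_conjI; rewrite -(unitary_conjM D) -(unitary_conjM N) -cE -TE.
have pN : p *m N = N *m p.
  apply/eqP/diag_intertwineP => j k /(diag_intertwineP _ _ _ (introT eqP DN)) djk.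
  by rewrite !mxE /upper djk.
pose Q := P^t* *m p *m P.
apply: (@det_ge0_conj_projector _ _ _ Q); first exact: realmxC.
- rewrite (map_mxM _ (P^t* *m p) P) (map_mxM _ (P^t*) p) map_mxCK p_conj -Pt_X -Xc_P.
  rewrite mulmxA -(mulmxA (P^t*) X) -(mulmxA (P^t*)).
  rewrite (swap_conj_proj p_add_q X_unitary pXp qXq).
  have qE : q = 1%:M - p by rewrite -p_add_q addrC addKr.
  by rewrite qE mulmxBr mulmx1 mulmxBl PtP.
- by rewrite unitary_conjM p_idem.
- by rewrite cE !unitary_conjM pN.
Qed.

Lemma reversing_involution :
  exists2 J : 'M_n, [/\ J \is a realmx, J^T = J, J *m J = 1%:M & J *m T = T^T *m J]
    & exists2 s, n = s.*2 & \det J = (-1) ^+ s.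
Proof.
exists g; first by split; [exact: g_real | exact: g_tr | exact: g_sqr | exact: g_reverses].
exact: det_normal_involution g_normal g_sqr mxtrace_g.
Qed.

Lemma det_reversing_eq J h : J \is a realmx -> h \is a realmx ->
  J *m J = 1%:M -> h *m h^T = 1%:M ->
  J *m T = T^T *m J -> h *m T = T^T *m h -> \det h = \det J.
Proof.
move=> J_real h_real JJ hh JT hT.
have TJ : T *m J = J *m T^T.
  by rewrite -[T *m J]mul1mx -JJ -mulmxA (mulmxA J T) JT -!mulmxA JJ mulmx1.
have /det_ge0_commute : (J *m h) *m T = T *m (J *m h).
  by rewrite -mulmxA hT !mulmxA TJ.
rewrite mxOverM // det_mulmx => /(_ isT) dJh_ge0.
have dJ2 : \det J ^+ 2 = 1 by rewrite expr2 -det_mulmx JJ det1.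
have dh2 : \det h ^+ 2 = 1 by rewrite expr2 -{2}det_tr -det_mulmx hh det1.
have : (\det J * \det h) ^+ 2 == 1 by rewrite exprMn dJ2 dh2 mulr1.
rewrite sqrp_eq1 // => /eqP dJh.
by rewrite -[LHS]mul1r -dJ2 expr2 -mulrA dJh mulr1.
Qed.

End RealNormalWithoutRealEigenvalues.

Lemma signr_eq1 (R : numDomainType) s : ((-1) ^+ s == 1 :> R) = ~~ odd s.
Proof.
rewrite -signr_odd; case: (odd s); rewrite ?eqxx //=.
by rewrite -subr_eq0 -opprD oppr_eq0 -mulr2n pnatr_eq0.
Qed.

Lemma invmx_orthomx (R : comUnitRingType) n (A : 'M[R]_n) :
  A *m A^T = 1%:M -> invmx A = A^T.
Proof.
move=> AA; have [A_unit _] := mulmx1_unit AA.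
by rewrite -[in RHS](mulKmx A_unit A^T) AA mulmx1.
Qed.

Lemma realmx_complex (R : rcfType) m n (A : 'M[R]_(m, n)) : map_mx (real_complex R) A \is a realmx.
Proof. by apply/mxOverP=> i j; rewrite mxE; apply/complex_realP; exists (A i j). Qed.

Lemma realmx_complexK (R : rcfType) m n (A : 'M[R[i]]_(m, n)) :
  A \is a realmx -> map_mx (real_complex R) (map_mx (@complex.Re R) A) = A.
Proof. by move=> /mxOverP A_real; apply/matrixP=> i j; rewrite !mxE RRe_real. Qed.

Lemma orthomx_reversing_det (R : rcfType) n (T : 'M[R]_n) :
  T *m T^T = 1%:M -> ~ eigenvalue T 1 -> ~ eigenvalue T (-1) ->
  exists2 s, n = s.*2 &
    (exists2 J : 'M[R]_n, J *m J^T = 1%:M /\ J *m T = T^T *m J & \det J = (-1) ^+ s) /\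
    (forall h, h *m h^T = 1%:M -> h *m T = T^T *m h -> \det h = (-1) ^+ s).
Proof.
move=> TT T1 TN1.
have Tc_real := realmx_complex T; set Tc := map_mx (real_complex R) T in Tc_real *.
have Tc_unitary : Tc \is unitarymx.
  by apply/unitarymxP; rewrite -map_trmx realmxC // map_trmx -map_mxM TT map_mx1.
have Tc_normal : Tc \is normalmx.
  by apply/normalmxP; rewrite (unitarymxP Tc_unitary) (mulmx1C (unitarymxP Tc_unitary)).
have Tc_eig a : eigenvalue Tc a -> a \isn't Num.real.
  move=> Tca; apply/negP => a_real.
  have /eqP := eigenvalue_unitary_norm Tc_unitary Tca.
  rewrite real_eqr_norml // ler01 andbT => /orP[]/eqP a1.
    by apply: T1; rewrite -(eigenvalue_map (real_complex R)) rmorph1 -a1.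
  by apply: TN1; rewrite -(eigenvalue_map (real_complex R)) rmorphN1 -a1.
have [J [J_real J_sym JJ JT] [s ns dJ]] := reversing_involution Tc_real Tc_normal Tc_eig.
have sign_rc : (-1) ^+ s = (real_complex R) ((-1) ^+ s) by rewrite rmorphXn rmorphN1.
exists s => //; split.
  have JE := realmx_complexK J_real; set JR := map_mx (@complex.Re R) J in JE.
  exists JR; first split; try apply: (@map_mx_inj _ _ (real_complex R)).
  - by rewrite map_mxM -map_trmx JE J_sym JJ map_mx1.
  - by rewrite !map_mxM -map_trmx JE JT.
  by apply: complexI; rewrite -det_map_mx JE dJ sign_rc.
move=> h hh hT; apply: complexI; rewrite -det_map_mx -sign_rc -dJ.
apply: (det_reversing_eq Tc_real Tc_normal Tc_eig J_real (realmx_complex h) JJ _ JT).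
  by rewrite map_trmx -map_mxM hh map_mx1.
by rewrite -map_mxM hT map_mxM -map_trmx.
Qed.

Theorem proposition3p4 (R : realType) (n : nat) (T : 'M[R]_n) :
  in_SO T ->
  ~ eigenvalue T 1 -> ~ eigenvalue T (-1) ->
  (real_in_SO T <-> (n %% 4 <> 2)%N).
Proof.
move=> [TT _] T1 TN1.
have [s ns [[J [JJ JT] dJ] det_reversing]] := orthomx_reversing_det TT T1 TN1.
have parity : (n %% 4 <> 2)%N <-> ~~ odd s.
  by rewrite ns; have := odd_double_half s; case: (odd s) => /= hs; split => //; lia.
rewrite /real_in_SO parity (invmx_orthomx TT); split.
  move=> [h [[hh dh] hE]].
  have h_unit : h \in unitmx by rewrite unitmxE dh unitr1.
  have hT : h *m T = T^T *m h by rewrite -hE mulmxKV.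
  by rewrite -(signr_eq1 R) -(det_reversing h hh hT) dh.
move=> s_even; exists J; split; first by split; last by rewrite dJ -signr_odd (negbTE s_even).
by rewrite invmx_orthomx // JT -mulmxA JJ mulmx1.
Qed.
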